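(* For every integer $k\ge1$, the free commutative semigroup on $k$ generators, i.e. $((\mathbb N\cup\{0\})^k\setminus\{(0,\dots,0)\},+)$ (in particular $(\mathbb N,+)$), is left and right fairly amenable.
   Context: For a semigroup $U$, $s\in U$, $A\subseteq U$: $s$ acts injectively on the left (right) of $A$ if $a\mapsto sa$ ($a\mapsto as$) is injective on $A$. A finitely-additive probability measure on $U$ is $\mu:\mathcal P(U)\to[0,1]$ with $\mu(U)=1$, additive on disjoint sets; it is left fairly invariant if $\mu(sA)=\mu(A)$ whenever $s$ acts injectively on the left of $A$ (right fairly invariant analogously with $As$). $U$ is left (right) fairly amenable if such a measure exists. *)

From Stdlib Require Import Reals List Lia.
Import ListNotations.
Open Scope R_scope.

Definition acts_inj_left {U : Type} (op : U -> U -> U) (s : U) (A : U -> Prop) : Prop :=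
  forall a b, A a -> A b -> op s a = op s b -> a = b.
Definition acts_inj_right {U : Type} (op : U -> U -> U) (s : U) (A : U -> Prop) : Prop :=
  forall a b, A a -> A b -> op a s = op b s -> a = b.

Definition lmul_set {U : Type} (op : U -> U -> U) (s : U) (A : U -> Prop) : U -> Prop :=
  fun x => exists a, A a /\ x = op s a.
Definition rmul_set {U : Type} (op : U -> U -> U) (s : U) (A : U -> Prop) : U -> Prop :=
  fun x => exists a, A a /\ x = op a s.

Definition fa_prob_measure {U : Type} (mu : (U -> Prop) -> R) : Prop :=
  (forall A, 0 <= mu A <= 1) /\
  mu (fun _ => True) = 1 /\
  (forall A B : U -> Prop, (forall x, A x -> B x -> False) ->
     mu (fun x => A x \/ B x) = mu A + mu B).

Definition left_fairly_invariant {U : Type} (op : U -> U -> U) (mu : (U -> Prop) -> R) : Prop :=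
  forall s A, acts_inj_left op s A -> mu (lmul_set op s A) = mu A.
Definition right_fairly_invariant {U : Type} (op : U -> U -> U) (mu : (U -> Prop) -> R) : Prop :=
  forall s A, acts_inj_right op s A -> mu (rmul_set op s A) = mu A.

Definition left_fairly_amenable {U : Type} (op : U -> U -> U) : Prop :=
  exists mu, fa_prob_measure mu /\ left_fairly_invariant op mu.
Definition right_fairly_amenable {U : Type} (op : U -> U -> U) : Prop :=
  exists mu, fa_prob_measure mu /\ right_fairly_invariant op mu.

(** The free commutative semigroup on k generators:
    (N ∪ {0})^k \ {(0,...,0)} under coordinatewise addition,
    with vectors represented as lists of length k. *)
Fixpoint vadd (u v : list nat) : list nat :=
  match u, v with
  | a :: u', b :: v' => (a + b)%nat :: vadd u' v'
  | _, _ => []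
  end.

Definition nonzero_vec (k : nat) (v : list nat) : Prop :=
  length v = k /\ exists n, In n v /\ n <> 0%nat.

Definition FCS (k : nat) : Type := { v : list nat | nonzero_vec k v }.

Lemma vadd_nonzero (k : nat) (u v : list nat) :
  nonzero_vec k u -> nonzero_vec k v -> nonzero_vec k (vadd u v).
Proof.
  intros [Hu [n [Hn Hn0]]] [Hv _]. subst k.
  revert v Hv. induction u as [|a u IH]; intros [|b v] Hv; simpl in *; try discriminate.
  - contradiction.
  - injection Hv as Hv. destruct Hn as [<-|Hn].
    + split; [f_equal|].
      * clear IH. revert v Hv; induction u; intros [|? ?] Hv; simpl in *; try discriminate; auto.
      * exists (a + b)%nat; split; [left; reflexivity | lia].
    + destruct (IH Hn v Hv) as [Hl [m [Hm Hm0]]].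
      split; [simpl; f_equal; assumption|].
      exists m; split; [right; exact Hm | exact Hm0].
Qed.

Definition fcs_add (k : nat) (x y : FCS k) : FCS k :=
  exist _ (vadd (proj1_sig x) (proj1_sig y))
        (vadd_nonzero k _ _ (proj2_sig x) (proj2_sig y)).

(* The invariant measure is built from a shift-invariant mean on N (a Banach
   limit).  Given such a mean m, which is finitely additive on [0,1]-valued
   sequences, its k-fold iterate
       M_k h = m (x1 => m (x2 => ... m (xk => h [x1; ...; xk])))
   is a finitely additive mean on [0,1]-valued functions on N^k that is
   invariant under every translation v |-> v + s.  Evaluating M_k on
   indicators gives a finitely additive probability measure on subsets of
   N^k \ {0}: total mass 1 holds because the singleton {0} is null (it misses
   every vector whose first coordinate is nonzero, so shift-invariance of m in
   that coordinate kills it).  Translation invariance yields mu (A + s) = mu A,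
   which is right fair invariance; commutativity gives left invariance.
   Finally a shift-invariant mean on N exists: take the limit of the Cesaro
   averages along an ultrafilter refining the Frechet filter. *)

From Stdlib Require Import Reals List.
From Stdlib Require Import Lra Lia FunctionalExtensionality ProofIrrelevance
  ClassicalEpsilon PropExtensionality.
From mathcomp Require all_boot all_order all_algebra all_classical all_reals all_analysis.
From mathcomp Require Rstruct lra.
Import ListNotations.
Local Open Scope R_scope.

Definition unit_valued {X : Type} (f : X -> R) : Prop := forall x, 0 <= f x <= 1.

Record shift_invariant_mean (m : (nat -> R) -> R) : Prop := {
  mean_bounded : forall f, unit_valued f -> 0 <= m f <= 1;
  mean_one : m (fun _ => 1) = 1;
  mean_add : forall f g, unit_valued f -> unit_valued g ->
    m (fun n => f n + g n) = m f + m g;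
  mean_shift : forall f, unit_valued f -> m (fun n => f (S n)) = m f
}.

Definition indicator {X : Type} (P : X -> Prop) (x : X) : R :=
  if excluded_middle_informative (P x) then 1 else 0.

Lemma indicator_unit_valued {X : Type} (P : X -> Prop) : unit_valued (indicator P).
Proof. intro x; unfold indicator; destruct excluded_middle_informative; lra. Qed.

Lemma indicator_false {X : Type} (P : X -> Prop) x : ~ P x -> indicator P x = 0.
Proof. intro H; unfold indicator; destruct excluded_middle_informative; tauto. Qed.

Lemma indicator_iff {X Y : Type} (P : X -> Prop) (Q : Y -> Prop) x y :
  (P x <-> Q y) -> indicator P x = indicator Q y.
Proof.
  intro E; unfold indicator.
  do 2 destruct excluded_middle_informative; tauto.
Qed.

Lemma indicator_disjoint_union {X : Type} (P Q : X -> Prop) x : ~ (P x /\ Q x) ->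
  indicator (fun y => P y \/ Q y) x = indicator P x + indicator Q x.
Proof.
  intro D; unfold indicator.
  do 3 destruct excluded_middle_informative; tauto || lra.
Qed.

Lemma indicator_compl {X : Type} (P : X -> Prop) x :
  indicator P x + indicator (fun y => ~ P y) x = 1.
Proof. unfold indicator; do 2 destruct excluded_middle_informative; tauto || lra. Qed.

Lemma vadd_comm (u v : list nat) : vadd u v = vadd v u.
Proof.
  revert v; induction u as [|a u IH]; intros [|b v]; simpl; auto.
  rewrite IH, Nat.add_comm; reflexivity.
Qed.

Lemma vadd_cancel_r (v w s : list nat) : length v = length s -> length w = length s ->
  vadd v s = vadd w s -> v = w.
Proof.
  revert w s; induction v as [|a v IH]; intros [|b w] [|c s] Hv Hw E;
    simpl in *; try discriminate; auto.
  injection Hv as Hv; injection Hw as Hw; injection E as E1 E2.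
  f_equal; [lia | exact (IH w s Hv Hw E2)].
Qed.

Lemma fcs_eq k (x y : FCS k) : proj1_sig x = proj1_sig y -> x = y.
Proof.
  destruct x as [x px], y as [y py]; simpl; intro E; subst y.
  f_equal; apply proof_irrelevance.
Qed.

Lemma fcs_add_comm k (x y : FCS k) : fcs_add k x y = fcs_add k y x.
Proof. apply fcs_eq; simpl; apply vadd_comm. Qed.

Lemma lmul_set_comm {U : Type} (op : U -> U -> U) (s : U) (A : U -> Prop) :
  (forall a b, op a b = op b a) -> lmul_set op s A = rmul_set op s A.
Proof.
  intro C; apply functional_extensionality; intro x; apply propositional_extensionality.
  unfold lmul_set, rmul_set; split; intros [a [Aa ->]]; exists a; split; auto.
Qed.

Definition lift_set k (A : FCS k -> Prop) (v : list nat) : Prop :=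
  exists p : nonzero_vec k v, A (exist _ v p).

Lemma lift_set_union k (A B : FCS k -> Prop) v :
  lift_set k (fun x => A x \/ B x) v <-> lift_set k A v \/ lift_set k B v.
Proof. unfold lift_set; firstorder. Qed.

Lemma lift_set_disjoint k (A B : FCS k -> Prop) v :
  (forall x, A x -> B x -> False) -> ~ (lift_set k A v /\ lift_set k B v).
Proof.
  intros D [[p Ap] [q Bq]].
  rewrite (proof_irrelevance _ q p) in Bq; exact (D _ Ap Bq).
Qed.

Lemma lift_set_full k x (w : list nat) : length w = k ->
  lift_set (S k) (fun _ => True) (S x :: w).
Proof.
  intro Hw; unshelve eexists; [|exact I].
  split; [simpl; rewrite Hw; reflexivity|].
  exists (S x); split; [left; reflexivity | discriminate].
Qed.

Lemma lift_set_rmul k (s : FCS k) (A : FCS k -> Prop) v : length v = k ->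
  lift_set k (rmul_set (fcs_add k) s A) (vadd v (proj1_sig s)) <-> lift_set k A v.
Proof.
  destruct s as [sv ps]; simpl; intro Hv; split.
  - intros [q [[av pa] [Aa E]]].
    apply (f_equal (@proj1_sig _ _)) in E; simpl in E.
    assert (av = v) by
      (apply (vadd_cancel_r av v sv); [destruct pa, ps | destruct ps | ]; congruence).
    subst av; exists pa; exact Aa.
  - intros [p Ap].
    exists (vadd_nonzero k v sv p ps), (exist _ v p); split; [exact Ap | apply fcs_eq; reflexivity].
Qed.

Section ProductMean.

Variable m : (nat -> R) -> R.
Hypothesis m_mean : shift_invariant_mean m.

(* The iterated mean M_k on functions of k-vectors; only the values on
   vectors of length k matter. *)
Fixpoint product_mean (k : nat) (h : list nat -> R) : R :=
  match k with
  | O => h []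
  | S k' => m (fun x => product_mean k' (fun v => h (x :: v)))
  end.

Lemma mean_shift_by (f : nat -> R) (a : nat) : unit_valued f ->
  m (fun x => f (x + a)%nat) = m f.
Proof.
  intro hf; induction a as [|a IH].
  - f_equal; apply functional_extensionality; intro x; f_equal; lia.
  - rewrite <- IH, <- (mean_shift m m_mean (fun x => f (x + a)%nat)) by (intro; apply hf).
    f_equal; apply functional_extensionality; intro x; f_equal; lia.
Qed.

Lemma product_mean_bounded k : forall h, unit_valued h -> 0 <= product_mean k h <= 1.
Proof.
  induction k as [|k IH]; intros h hh; simpl.
  - apply hh.
  - apply (mean_bounded m m_mean); intro x; apply IH; intro v; apply hh.
Qed.

Lemma product_mean_one k : product_mean k (fun _ => 1) = 1.
Proof.
  induction k as [|k IH]; simpl; [reflexivity|].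
  rewrite IH; apply (mean_one m m_mean).
Qed.

Lemma product_mean_add k : forall h h', unit_valued h -> unit_valued h' ->
  product_mean k (fun v => h v + h' v) = product_mean k h + product_mean k h'.
Proof.
  induction k as [|k IH]; intros h h' hh hh'; simpl; [reflexivity|].
  rewrite <- (mean_add m m_mean) by (intro x; apply product_mean_bounded; intro; auto).
  f_equal; apply functional_extensionality; intro x; apply IH; intro v; auto.
Qed.

Lemma product_mean_ext k : forall h h',
  (forall v, length v = k -> h v = h' v) -> product_mean k h = product_mean k h'.
Proof.
  induction k as [|k IH]; intros h h' E; simpl.
  - apply E; reflexivity.
  - f_equal; apply functional_extensionality; intro x; apply IH.
    intros v Hv; apply E; simpl; rewrite Hv; reflexivity.
Qed.

Lemma product_mean_translate k : forall h s, unit_valued h -> length s = k ->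
  product_mean k (fun v => h (vadd v s)) = product_mean k h.
Proof.
  induction k as [|k IH]; intros h s hh Hs.
  - destruct s; [reflexivity | discriminate].
  - destruct s as [|a s]; [discriminate|]; injection Hs as Hs; simpl.
    rewrite <- (mean_shift_by (fun x => product_mean k (fun v => h (x :: v))) a)
      by (intro; apply product_mean_bounded; intro; apply hh).
    f_equal; apply functional_extensionality; intro x.
    apply (IH (fun v => h ((x + a)%nat :: v))); [intro; apply hh | exact Hs].
Qed.

Lemma product_mean_zero k : product_mean k (fun _ => 0) = 0.
Proof.
  assert (Z : unit_valued (fun _ : list nat => 0)) by (intro; lra).
  assert (D := product_mean_add k _ _ Z Z); cbv beta in D.
  replace (fun _ : list nat => 0 + 0) with (fun _ : list nat => 0) in D
    by (apply functional_extensionality; intro; lra).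
  lra.
Qed.

Lemma product_mean_null k h : unit_valued h ->
  (forall x v, length v = k -> h (S x :: v) = 0) -> product_mean (S k) h = 0.
Proof.
  intros hh H0; simpl.
  rewrite <- (mean_shift m m_mean) by (intro; apply product_mean_bounded; intro; apply hh).
  rewrite <- (product_mean_zero (S k)); simpl.
  f_equal; apply functional_extensionality; intro x.
  apply product_mean_ext; intros v Hv; apply H0, Hv.
Qed.


Definition fcs_measure k (A : FCS k -> Prop) : R :=
  product_mean k (indicator (lift_set k A)).

(* Total mass 1: the complement of FCS k in N^k is {0}, a null set. *)
Lemma fcs_measure_full k : (1 <= k)%nat -> fcs_measure k (fun _ => True) = 1.
Proof.
  intro hk; destruct k as [|k]; [lia|].
  assert (Null : product_mean (S k) (indicator (fun v => ~ lift_set (S k) (fun _ => True) v)) = 0).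
  { apply product_mean_null; [apply indicator_unit_valued|].
    intros x v Hv; apply indicator_false; intro N; exact (N (lift_set_full k x v Hv)). }
  unfold fcs_measure; rewrite <- (Rplus_0_r (product_mean _ _)), <- Null.
  rewrite <- product_mean_add, <- (product_mean_one (S k)) by apply indicator_unit_valued.
  apply product_mean_ext; intros v _; apply indicator_compl.
Qed.

Lemma fcs_measure_prob k : (1 <= k)%nat -> fa_prob_measure (fcs_measure k).
Proof.
  intro hk; split; [|split].
  - intro A; apply product_mean_bounded, indicator_unit_valued.
  - exact (fcs_measure_full k hk).
  - intros A B D; unfold fcs_measure.
    rewrite <- product_mean_add by apply indicator_unit_valued.
    apply product_mean_ext; intros v _.
    rewrite (indicator_iff _ (fun w => lift_set k A w \/ lift_set k B w) v v
      (lift_set_union k A B v)).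
    exact (indicator_disjoint_union _ _ v (lift_set_disjoint k A B v D)).
Qed.

(* Right translation invariance, even without the injectivity hypothesis. *)
Lemma fcs_measure_rmul k (s : FCS k) (A : FCS k -> Prop) :
  fcs_measure k (rmul_set (fcs_add k) s A) = fcs_measure k A.
Proof.
  unfold fcs_measure.
  rewrite <- (product_mean_translate k _ (proj1_sig s)) by
    (apply indicator_unit_valued || exact (proj1 (proj2_sig s))).
  apply product_mean_ext; intros v Hv; apply indicator_iff, lift_set_rmul, Hv.
Qed.

Lemma fcs_fairly_amenable k : (1 <= k)%nat ->
  left_fairly_amenable (fcs_add k) /\ right_fairly_amenable (fcs_add k).
Proof.
  intro hk; split; exists (fcs_measure k); split; try exact (fcs_measure_prob k hk).
  - intros s A _; rewrite lmul_set_comm by apply fcs_add_comm.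
    apply fcs_measure_rmul.
  - intros s A _; apply fcs_measure_rmul.
Qed.

End ProductMean.

Module BanachMean.
Import all_boot all_order all_algebra.
Import all_classical all_reals all_analysis.
Import Rstruct lra.
Import Order.TTheory GRing.Theory Num.Theory.
Import numFieldNormedType.Exports.
Local Open Scope classical_set_scope.
Local Open Scope ring_scope.

Section CesaroLimit.
Variable RR : realType.

(* Bounded sequences converge along an ultrafilter, by compactness of [a, b]. *)
Lemma ultra_cvg_bounded (G : set_system nat) (GU : UltraFilter G) (u : nat -> RR) (a b : RR) :
  (forall n, a <= u n <= b) -> exists l, a <= l <= b /\ u @ G --> l.
Proof.
move=> hu; have PF : ProperFilter (u @ G) by exact: fmap_proper_filter.
have Gab : G (u @^-1` `[a, b]%classic).
  by apply: filterS (@filterT _ G _) => n _ /=; rewrite in_itv /= hu.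
have [p [abp clp]] := segment_compact PF Gab.
exists p; split; first by move: abp; rewrite /= in_itv.
move=> V Vp; have [//|GnV] := in_ultra_setVsetC (u @^-1` V) GU.
have GnV' : (u @ G) (~` V) by [].
by have [x [nVx Vx]] := clp _ _ GnV' Vp.
Qed.

Definition cesaro (f : nat -> RR) (n : nat) : RR := (\sum_(i < n.+1) f i) / n.+1%:R.

Lemma cesaro_bounded f : (forall n, 0 <= f n <= 1) -> forall n, 0 <= cesaro f n <= 1.
Proof.
move=> hf n; rewrite /cesaro; apply/andP; split.
  by apply: divr_ge0 => //; apply: sumr_ge0 => i _; case/andP: (hf i).
rewrite ler_pdivrMr ?ltr0Sn // mul1r.
have -> : n.+1%:R = \sum_(i < n.+1) (1 : RR) by rewrite sumr_const card_ord.
by apply: ler_sum => i _; case/andP: (hf i).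
Qed.

Lemma cesaroD f g n : cesaro (fun k => f k + g k) n = cesaro f n + cesaro g n.
Proof. by rewrite /cesaro big_split /= mulrDl. Qed.

Lemma cesaro_shift f n :
  cesaro (fun k => f k.+1) n - cesaro f n = (f n.+1 - f 0%N) / n.+1%:R.
Proof.
rewrite /cesaro -mulrBl; congr (_ * _).
have E1 : \sum_(i < n.+2) f i = \sum_(i < n.+1) f i + f n.+1 by rewrite big_ord_recr.
have E2 : \sum_(i < n.+2) f i = f 0%N + \sum_(i < n.+1) f (bump 0 i)
  by rewrite big_ord_recl.
have -> : \sum_(i < n.+1) f i.+1 = \sum_(i < n.+1) f (bump 0 i) by [].
move: E1 E2; set S := \sum_(i < n.+2) f i.
set s1 := \sum_(i < n.+1) f (bump 0 i); set s2 := \sum_(i < n.+1) f i.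
lra.
Qed.

Lemma cesaro_mean_exists : exists m : (nat -> RR) -> RR,
  [/\ forall f, (forall n, 0 <= f n <= 1) -> 0 <= m f <= 1,
      m (fun _ => 1) = 1,
      forall f g, (forall n, 0 <= f n <= 1) -> (forall n, 0 <= g n <= 1) ->
        m (fun n => f n + g n) = m f + m g
    & forall f, (forall n, 0 <= f n <= 1) -> m (fun n => f n.+1) = m f].
Proof.
have [G [GU sG]] := @ultraFilterLemma nat \oo _.
have lim_of f : (forall n, 0 <= f n <= 1) -> exists l : RR, 0 <= l <= 1 /\ cesaro f @ G --> l.
  by move=> hf; apply: ultra_cvg_bounded; apply: cesaro_bounded.
have limE (l : RR) (u : nat -> RR) : u @ G --> l -> lim (u @ G) = l.
  by move=> ul; apply: (cvg_lim (@Rhausdorff RR)).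
exists (fun f => lim (cesaro f @ G)); split.
- by move=> f /lim_of [l [hl /limE ->]].
- apply: limE; have -> : cesaro (fun _ => 1) = fun _ => 1.
    by apply: funext => n; rewrite /cesaro sumr_const card_ord divff.
  exact: cvg_cst.
- move=> f g /lim_of [lf [_ cf]] /lim_of [lg [_ cg]].
  have -> : cesaro (fun n => f n + g n) = cesaro f + cesaro g.
    by apply: funext => n; rewrite cesaroD.
  by rewrite (limE _ _ cf) (limE _ _ cg); apply: limE; exact: cvgD.
- move=> f hf; have [lf [_ cf]] := lim_of f hf.
  pose d n := cesaro (fun k => f k.+1) n - cesaro f n.
  have d0 : d @ \oo --> 0.
    apply: (@squeeze_cvgr _ _ _ _ (fun n => - harmonic n) (@harmonic RR)).
    + apply: nearW => n; rewrite /d cesaro_shift /=.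
      have hp : 0 < (n.+1%:R : RR)^-1 by rewrite invr_gt0 ltr0Sn.
      move: hp (hf n.+1) (hf 0%N); set h := (n.+1%:R : RR)^-1.
      by move=> hp /andP [a1 a2] /andP [b1 b2]; apply/andP; split; nra.
    + by rewrite -oppr0; apply: cvgN; exact: cvg_harmonic.
    + exact: cvg_harmonic.
  have -> : cesaro (fun k => f k.+1) = d + cesaro f.
    by apply: funext => n; rewrite /d /= subrK.
  rewrite (limE _ _ cf); apply: limE.
  by rewrite -[lf]add0r; apply: cvgD => //; move=> A /d0; apply: sG.
Qed.

End CesaroLimit.

Lemma mean_exists : exists m, shift_invariant_mean m.
Proof.
have [m [mB m1 mD mS]] := @cesaro_mean_exists R.
have cv f : unit_valued f -> forall n, 0 <= f n <= 1.
  by move=> hf n; have [h1 h2] := hf n; apply/andP; split; apply/RleP.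
exists m; split => //.
- by move=> f /cv /mB /andP [h1 h2]; split; apply/RleP.
- by move=> f g /cv hf /cv hg; apply: mD.
- by move=> f /cv; apply: mS.
Qed.

End BanachMean.

Theorem mainTheorem17 (k : nat) (hk : (1 <= k)%nat) :
  left_fairly_amenable (fcs_add k) /\ right_fairly_amenable (fcs_add k).
Proof.
  destruct BanachMean.mean_exists as [m Hm].
  exact (fcs_fairly_amenable m Hm k hk).
Qed.
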